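(* Let $G=(V,E)$ be an undirected graph with $n=|V|$ nodes, and let $L_0 \subseteq V$ be any set of nodes, with $L_1$, $L_2$, $L_{\geq 2}$, $d^+(L_0)$, the reaching attempt, $rs(v)$ and the procedure Sample defined as in the context. Suppose the estimate $\bar\ell_{\geq 2}$ used by Sample satisfies $\bar\ell_{\geq 2} \in [(1-\delta)|L_{\geq 2}|, (1+\delta)|L_{\geq 2}|]$, and that the baseline reachability $rs_0$ used by Sample is the $\varepsilon$-th percentile of the reachability distribution over $L_{\geq 2}$, i.e., at least a $(1-\varepsilon)$ fraction of the nodes $v \in L_{\geq 2}$ satisfy $rs(v) \ge rs_0$. Then the distribution of the node output by Sample is $(\varepsilon + \delta + O((\varepsilon+\delta)^2))$-close to the uniform distribution on $V$ in total variation distance. Furthermore, every node of $G$ is output by Sample with probability at most $(1 + \varepsilon + \delta + O((\varepsilon+\delta)^2))/n$.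
   Context: Layers: given $L_0 \subseteq V$, let $L_1 = \bigcup_{v\in L_0} N(v) \setminus L_0$ (where $N(v)$ is the neighbor set of $v$), let $L_2$ be the set of nodes at distance exactly $2$ from $L_0$, and let $L_{\geq 2} = V \setminus (L_0 \cup L_1)$. Let $G_{\geq 2}$ be the graph with node set $L_{\geq 2}$ whose edges are the edges of $G$ between $L_2$ and $L_{\geq 2}\setminus L_2$ and the edges of $G$ with both endpoints in $L_{\geq 2}\setminus L_2$ (edges with both endpoints in $L_2$ are excluded); for $v \in L_{\geq 2}$, $C(v)$ denotes the connected component of $G_{\geq 2}$ containing $v$. Let $d^+(L_0)$ denote the number of edges between $L_0$ and $L_1$. A single reaching attempt does the following: pick a uniformly random edge between $L_0$ and $L_1$, let $u$ be its $L_1$-endpoint; if $u$ has no neighbor in $L_2$ the attempt fails; otherwise pick a random neighbor $v\in L_2$ of $u$, compute the component $C(v)$ (by BFS), and output a uniformly random node $w \in C(v)$. The procedure Reach repeats attempts until one succeeds and returns its output node together with its reachability score. For $v \in L_{\geq 2}$, the reachability score $rs(v)$ is the value such that a single attempt outputs (reaches) $v$ with probability $rs(v)/d^+(L_0)$. Procedure Sample (with inputs $\bar\ell_{\geq 2}$ and $rs_0>0$): let $\bar n = |L_0| + |L_1| + \bar\ell_{\geq 2}$; with probability $|L_0|/\bar n$ output a uniformly random node of $L_0$; with probability $|L_1|/\bar n$ output a uniformly random node of $L_1$; otherwise repeat: call Reach to get a node $w \in L_{\geq 2}$ and $rs(w)$, and accept and output $w$ with probability $\min(1, rs_0/rs(w))$,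 else repeat. *)

(* finite graphs as symmetric irreflexive relations on a finType,
   probabilities as values in an arbitrary real field R. *)
From HB Require Import structures.
From mathcomp Require Import all_boot all_order all_algebra.
Set Implicit Arguments. Unset Strict Implicit. Unset Printing Implicit Defensive.
Import Order.TTheory GRing.Theory Num.Theory.
Local Open Scope ring_scope.

Section Layers.
Variables (R : realFieldType) (T : finType) (e : rel T) (L0 : {set T}).

Definition nbr (v : T) : {set T} := [set u | e v u].

Definition L1 : {set T} := (\bigcup_(v in L0) nbr v) :\: L0.

Definition L2 : {set T} :=
  [set w | (w \notin L0 :|: L1) && [exists u in L1, e u w]].

Definition Lge2 : {set T} := ~: (L0 :|: L1).

Definition e2 : rel T := fun x y =>
  [&& e x y, x \in Lge2, y \in Lge2 & ~~ ((x \in L2) && (y \in L2))].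

Definition comp (v : T) : {set T} := [set w | connect e2 v w].

Definition bnd_edges : {set T * T} :=
  [set p | [&& p.1 \in L0, p.2 \in L1 & e p.1 p.2]].

Definition dplus : nat := #|bnd_edges|.

Definition nbr2 (u : T) : {set T} := nbr u :&: L2.

(* probability that a single reaching attempt outputs w:
   uniform edge (x,u) between L0 and L1; uniform L2-neighbor v of u (fail if none);
   uniform node of C(v). *)
Definition attempt_prob (w : T) : R :=
  \sum_(p in bnd_edges) (dplus%:R)^-1 *
    \sum_(v in nbr2 p.2)
       (#|nbr2 p.2|%:R)^-1 * ((w \in comp v)%:R * (#|comp v|%:R)^-1).

(* reachability score: a single attempt reaches v w.p. rs(v)/d^+(L0) *)
Definition rs (v : T) : R := dplus%:R * attempt_prob v.

(* Output distribution of "repeat independent trials until one succeeds",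
   where a single trial succeeds with output w with probability f w:
   the output is w with probability f w / (sum_v f v). *)
Definition repeat_until (f : T -> R) (w : T) : R := f w / \sum_v f v.

Definition reach_prob (w : T) : R := repeat_until attempt_prob w.

Definition sample_prob (lbar rs0 : R) (w : T) : R :=
  let nbar := #|L0|%:R + #|L1|%:R + lbar in
  (w \in L0)%:R * ((#|L0|%:R / nbar) * (#|L0|%:R)^-1)
  + (w \in L1)%:R * ((#|L1|%:R / nbar) * (#|L1|%:R)^-1)
  + (1 - #|L0|%:R / nbar - #|L1|%:R / nbar) *
      repeat_until (fun x => reach_prob x * Num.min 1 (rs0 / rs x)) w.

End Layers.

Definition tv_uniform (R : realFieldType) (T : finType) (p : T -> R) : R :=
  2^-1 * \sum_(v : T) `|p v - (#|T|%:R)^-1|.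

From Pilot Require Import Defs.
From mathcomp Require Import all_boot all_order all_algebra.
From mathcomp Require Import ring lra.
Set Implicit Arguments. Unset Strict Implicit. Unset Printing Implicit Defensive.
Import Order.TTheory GRing.Theory Num.Theory.
Local Open Scope ring_scope.

(* Sample gives every node of L0 and of L1 the probability 1/nbar, where
   nbar = |L0| + |L1| + lbar, and hands the remaining mass lbar/nbar to
   rejection sampling on L_{>=2}.  Reach outputs v with probability
   proportional to rs(v), so accepting with probability min(1, rs0/rs(v))
   leaves v with weight proportional to min(rs(v), rs0): this weight is
   maximal on the at least (1 - eps)|L_{>=2}| nodes with rs(v) >= rs0, so no
   node of L_{>=2} is output with probability above
   lbar / (nbar (1 - eps) |L_{>=2}|).  As lbar is within a factor 1 +- delta
   of |L_{>=2}|, every node is output with probability at most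
   (1 + eps + delta + 2 (eps + delta)^2) / n.  Finally, a distribution
   bounded pointwise by B/n is within B - 1 of uniform in total variation,
   because the distance is the total mass in excess of 1/n. *)

Section RepeatUntil.
Variables (R : realFieldType) (T : finType).

Lemma sum_repeat_until (f : T -> R) :
  \sum_x f x != 0 -> \sum_w repeat_until f w = 1.
Proof. by move=> sum_neq0; rewrite /repeat_until -mulr_suml mulfV. Qed.

Variables (f : T -> R) (k : R) (G : {set T}).
Hypotheses (f_ge0 : forall x, 0 <= f x) (f_le : forall x, f x <= k).
Hypotheses (f_G : {in G, forall x, f x = k}) (k_gt0 : 0 < k).
Hypothesis G_gt0 : (0 < #|G|)%N.

Lemma card_mulr_le_sum_weights : #|G|%:R * k <= \sum_x f x.
Proof.
rewrite (bigID (mem G)) /= (eq_bigr (fun=> k)) // sumr_const mulr_natl lerDl.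
exact: sumr_ge0.
Qed.

Lemma sum_weights_gt0 : 0 < \sum_x f x.
Proof.
by apply: lt_le_trans card_mulr_le_sum_weights; rewrite mulr_gt0 ?ltr0n.
Qed.

Lemma repeat_until_le_inv_card w : repeat_until f w <= #|G|%:R^-1.
Proof.
rewrite /repeat_until ler_pdivrMr ?sum_weights_gt0 //.
apply: le_trans (f_le w) _.
by rewrite ler_pdivlMl ?ltr0n // card_mulr_le_sum_weights.
Qed.

End RepeatUntil.

Lemma tv_uniform_le (R : realFieldType) (T : finType) (p : T -> R) (B : R) :
  1 <= B -> \sum_v p v = 1 -> (forall v, p v <= B / #|T|%:R) ->
  tv_uniform p <= B - 1.
Proof.
move=> B_ge1 p_sum1 p_le; set n : R := #|T|%:R.
have n_gt0 : 0 < n.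
  rewrite ltr0n lt0n; apply/eqP => /card0_eq T0.
  by move: p_sum1; rewrite big_pred0 // => /esym/eqP; rewrite oner_eq0.
have sum_excess0 : \sum_v (p v - n^-1) = 0.
  by rewrite sumrB p_sum1 sumr_const -mulr_natr mulVf ?subrr ?gt_eqF.
(* |x| + x is twice the positive part of x *)
have excess_le v : `|p v - n^-1| + (p v - n^-1) <= 2 * ((B - 1) / n).
  have : p v - n^-1 <= (B - 1) / n by rewrite mulrBl mul1r lerD2r p_le.
  have : 0 <= (B - 1) / n by apply: divr_ge0; [rewrite subr_ge0 | exact: ltW].
  by case: (lerP 0 (p v - n^-1)) => [/ger0_norm|/ltr0_norm] ->; lra.
rewrite /tv_uniform -[\sum_v _]addr0 -{2}sum_excess0 -big_split /=.
apply: le_trans (_ : 2^-1 * \sum_(v : T) 2 * ((B - 1) / n) <= _).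
  by rewrite ler_wpM2l ?invr_ge0 ?ler0n // ler_sum.
by rewrite sumr_const -(mulr_natr _ #|T|) -/n -mulrA divfK ?gt_eqF // mulKf ?pnatr_eq0.
Qed.

Section Layers.
Variables (R : realFieldType) (T : finType) (e : rel T) (L0 : {set T}).

Lemma L2_subset_Lge2 : L2 e L0 \subset Lge2 e L0.
Proof. by apply/subsetP => v; rewrite !inE => /andP[]. Qed.

Lemma comp_subset_Lge2 v :
  v \in Lge2 e L0 -> Defs.comp e L0 v \subset Lge2 e L0.
Proof.
move=> v_Lge2; apply/subsetP => w; rewrite inE => /connectP[p].
elim/last_ind: p => [_ -> //| p x _].
by rewrite rcons_path last_rcons => /andP[_ /and4P[]] _ _ x_Lge2 _ ->.
Qed.

Lemma attempt_prob_ge0 w : 0 <= attempt_prob R e L0 w.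
Proof.
apply: sumr_ge0 => p _; rewrite mulr_ge0 ?invr_ge0 ?ler0n //.
by apply: sumr_ge0 => v _; rewrite !mulr_ge0 ?invr_ge0 ?ler0n.
Qed.

Lemma attempt_prob_le_sum w :
  attempt_prob R e L0 w <= \sum_v attempt_prob R e L0 v.
Proof.
by rewrite (bigD1 w) //= lerDl sumr_ge0 // => v _; apply: attempt_prob_ge0.
Qed.

Lemma rs_ge0 w : 0 <= rs R e L0 w.
Proof. by rewrite mulr_ge0 ?ler0n ?attempt_prob_ge0. Qed.

Lemma attempt_prob_notin_Lge2 w :
  w \notin Lge2 e L0 -> attempt_prob R e L0 w = 0.
Proof.
move=> w_notin; apply: big1 => p _; rewrite big1 ?mulr0 // => v.
rewrite inE => /andP[_ /(subsetP L2_subset_Lge2)/comp_subset_Lge2 sub].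
by rewrite (contraNF (subsetP sub w)) // mul0r mulr0.
Qed.

Lemma disjoint_L0_L1 : [disjoint L0 & L1 e L0].
Proof.
by rewrite -setI_eq0; apply/eqP/setP => v; rewrite !inE; case: (v \in L0).
Qed.

Lemma setC_Lge2 : ~: Lge2 e L0 = L0 :|: L1 e L0.
Proof. exact: setCK. Qed.

Lemma card_setC_Lge2 : #|~: Lge2 e L0| = (#|L0| + #|L1 e L0|)%N.
Proof.
by rewrite setC_Lge2 cardsU disjoint_setI0 ?disjoint_L0_L1 ?cards0 ?subn0.
Qed.

Lemma card_layers : (#|L0| + #|L1 e L0| + #|Lge2 e L0|)%N = #|T|.
Proof. by rewrite -card_setC_Lge2 addnC cardsC. Qed.

End Layers.

Section Acceptance.
Variables (R : realFieldType) (T : finType) (e : rel T) (L0 : {set T}).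
Variable rs0 : R.
Hypothesis rs0_gt0 : 0 < rs0.

Local Notation attempt := (attempt_prob R e L0).
Local Notation D := ((dplus e L0)%:R : R).
Local Notation A := (\sum_v attempt_prob R e L0 v).

Definition accept_weight (x : T) : R :=
  reach_prob R e L0 x * Num.min 1 (rs0 / rs R e L0 x).

Definition well_reached : {set T} :=
  [set v in Lge2 e L0 | rs0 <= rs R e L0 v].

Lemma accept_weight_ge0 x : 0 <= accept_weight x.
Proof.
apply: mulr_ge0.
  by rewrite divr_ge0 ?attempt_prob_ge0 ?sumr_ge0 // => v _; apply: attempt_prob_ge0.
by rewrite le_min ler01 divr_ge0 ?rs_ge0 ?(ltW rs0_gt0).
Qed.

Lemma accept_weight_le x : 0 < D -> 0 < A -> accept_weight x <= rs0 / (D * A).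
Proof.
move=> D_gt0 A_gt0; rewrite /accept_weight /reach_prob /repeat_until /rs.
have [->|att_neq0] := eqVneq (attempt x) 0.
  by rewrite !mul0r ltW // !divr_gt0 ?mulr_gt0.
apply: le_trans (_ : attempt x / A * (rs0 / (D * attempt x)) <= _).
  rewrite ler_wpM2l ?divr_ge0 ?attempt_prob_ge0 ?(ltW A_gt0) //.
  by rewrite ge_min lexx orbT.
suff -> : attempt x / A * (rs0 / (D * attempt x)) = rs0 / (D * A) by [].
by field; rewrite att_neq0 !gt_eqF.
Qed.

Lemma well_reached_gt0 x : x \in well_reached -> 0 < D /\ 0 < attempt x.
Proof.
rewrite inE => /andP[_ /(lt_le_trans rs0_gt0)].
by rewrite mulr_ge0_gt0 ?ler0n ?attempt_prob_ge0 // => /andP.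
Qed.

Lemma accept_weight_well_reached x :
  x \in well_reached -> accept_weight x = rs0 / (D * A).
Proof.
move=> x_good; have [D_gt0 att_gt0] := well_reached_gt0 x_good.
have A_gt0 := lt_le_trans att_gt0 (attempt_prob_le_sum R e L0 x).
move: x_good; rewrite inE => /andP[_ rs_ge].
rewrite /accept_weight min_r ?ler_pdivrMr ?mul1r ?(lt_le_trans rs0_gt0) //.
by rewrite /reach_prob /repeat_until /rs; field; rewrite !gt_eqF.
Qed.

Lemma repeat_accept_notin_Lge2 w :
  w \notin Lge2 e L0 -> repeat_until accept_weight w = 0.
Proof.
move=> w_notin; rewrite /repeat_until /accept_weight /reach_prob /repeat_until.
by rewrite attempt_prob_notin_Lge2 ?mul0r.
Qed.

Section NonEmpty.
Hypothesis well_reached_nonempty : (0 < #|well_reached|)%N.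

Let D_A_gt0 : 0 < D /\ 0 < A.
Proof.
case/card_gt0P: well_reached_nonempty => x /well_reached_gt0[D_gt0 att_gt0].
by split; last exact: lt_le_trans att_gt0 (attempt_prob_le_sum R e L0 x).
Qed.

Let accept_bound_gt0 : 0 < rs0 / (D * A).
Proof. by case: D_A_gt0 => D_gt0 A_gt0; rewrite !divr_gt0 ?mulr_gt0. Qed.

Let accept_weight_bounded x : accept_weight x <= rs0 / (D * A).
Proof. by case: D_A_gt0 => D_gt0 A_gt0; apply: accept_weight_le. Qed.

Lemma repeat_accept_le w :
  repeat_until accept_weight w <= #|well_reached|%:R^-1.
Proof.
exact: repeat_until_le_inv_card accept_weight_ge0 accept_weight_bounded
  accept_weight_well_reached accept_bound_gt0 well_reached_nonempty w.
Qed.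

Lemma sum_repeat_accept : \sum_w repeat_until accept_weight w = 1.
Proof.
apply/sum_repeat_until/lt0r_neq0.
exact: sum_weights_gt0 accept_weight_ge0 accept_weight_well_reached
  accept_bound_gt0 well_reached_nonempty.
Qed.

End NonEmpty.

End Acceptance.

Lemma natr_mem_mulKcard (R : realFieldType) (T : finType) (S : {set T})
    (w : T) (c : R) :
  (w \in S)%:R * (#|S|%:R * c * #|S|%:R^-1) = (w \in S)%:R * c.
Proof.
have [w_S|] := boolP (w \in S); last by rewrite !mul0r.
by rewrite mulrAC mulfV ?mul1r // pnatr_eq0 -lt0n; apply/card_gt0P; exists w.
Qed.

Lemma second_order_bounds (R : realFieldType) (x y : R) :
  0 <= x -> 0 <= y -> x + y <= 1 / 2 ->
  let B := 1 + x + y + 2 * (x + y) ^+ 2 in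
  1 + y <= B * (1 - x) /\ 1 + x <= B * (1 - y).
Proof.
move=> x_ge0 y_ge0 s_le /=.
have : 0 <= (x + y) ^+ 2 * (1 - 2 * x) by rewrite mulr_ge0 ?sqr_ge0 //; lra.
have : 0 <= (x + y) ^+ 2 * (1 - 2 * y) by rewrite mulr_ge0 ?sqr_ge0 //; lra.
have : 0 <= (x + y) * x by rewrite mulr_ge0 ?addr_ge0.
have : 0 <= (x + y) * y by rewrite mulr_ge0 ?addr_ge0.
by rewrite !expr2; split; nra.
Qed.

Section Sample.
Variables (R : realFieldType) (T : finType) (e : rel T) (L0 : {set T}).
Variables (eps delta lbar rs0 : R).

Local Notation a := (#|L0|%:R : R).
Local Notation b := (#|L1 e L0|%:R : R).
Local Notation m := (#|Lge2 e L0|%:R : R).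
Local Notation n := (#|T|%:R : R).
Local Notation nbar := (a + b + lbar).
Local Notation g := (#|well_reached e L0 rs0|%:R : R).
Local Notation B := (1 + eps + delta + 2 * (eps + delta) ^+ 2).

Lemma sample_probE w : nbar != 0 ->
  sample_prob e L0 lbar rs0 w =
    (w \notin Lge2 e L0)%:R / nbar
    + lbar / nbar * repeat_until (accept_weight e L0 rs0) w.
Proof.
move=> nbar_neq0; rewrite /sample_prob /= !natr_mem_mulKcard.
have mem_layers :
    (w \in L0)%:R + (w \in L1 e L0)%:R = (w \notin Lge2 e L0)%:R :> R.
  rewrite -in_setC setC_Lge2 in_setU.
  have [w_L0|] := boolP (w \in L0); last by rewrite add0r.
  by rewrite (disjointFr (disjoint_L0_L1 e L0) w_L0) addr0.
by rewrite -mem_layers; field.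
Qed.

(* lra and nra do not see section hypotheses, hence the [move: ...] below. *)
Hypotheses (eps_ge0 : 0 <= eps) (delta_ge0 : 0 <= delta).
Hypothesis eps_delta_le : eps + delta <= 1 / 2.
Hypotheses (lbar_ge : (1 - delta) * m <= lbar) (lbar_le : lbar <= (1 + delta) * m).
Hypotheses (rs0_gt0 : 0 < rs0) (well_reached_ge : (1 - eps) * m <= g).

Lemma n_eq_layers : n = a + b + m.
Proof. by rewrite -!natrD card_layers. Qed.

Lemma nbar_ge : (1 - delta) * n <= nbar.
Proof.
have : 0 <= delta * (a + b) by rewrite mulr_ge0 ?addr_ge0 ?ler0n.
by rewrite n_eq_layers; move: lbar_ge; lra.
Qed.

Lemma nbar_gt0 : (0 < #|T|)%N -> 0 < nbar.
Proof.
move=> T_gt0; apply: lt_le_trans nbar_ge; rewrite mulr_gt0 ?ltr0n //.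
by move: eps_ge0 eps_delta_le; lra.
Qed.

Lemma lbar_ge0 : 0 <= lbar.
Proof.
apply: le_trans lbar_ge; rewrite mulr_ge0 ?ler0n //.
by move: eps_ge0 eps_delta_le; lra.
Qed.

Lemma card_well_reached_gt0 :
  (0 < #|Lge2 e L0|)%N -> (0 < #|well_reached e L0 rs0|)%N.
Proof.
rewrite -!(ltr0n R) => m_gt0; apply: lt_le_trans well_reached_ge.
by rewrite mulr_gt0 //; move: delta_ge0 eps_delta_le; lra.
Qed.

Lemma sample_prob_le w : sample_prob e L0 lbar rs0 w <= B / n.
Proof.
have n_gt0 : 0 < n by rewrite ltr0n; apply/card_gt0P; exists w.
have nbar_pos : 0 < nbar by apply/nbar_gt0/card_gt0P; exists w.
have [B_eps B_delta] := second_order_bounds eps_ge0 delta_ge0 eps_delta_le.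
have B_ge0 : 0 <= B.
  by have := sqr_ge0 (eps + delta); move: eps_ge0 delta_ge0; lra.
rewrite sample_probE ?gt_eqF //.
have [w_Lge2|w_notin] := boolP (w \in Lge2 e L0); last first.
  rewrite repeat_accept_notin_Lge2 // mulr0 addr0 mul1r.
  rewrite ler_pdivlMr // mulrC ler_pdivrMr //.
  apply: le_trans (_ : B * ((1 - delta) * n) <= _); last first.
    by rewrite ler_wpM2l ?nbar_ge.
  by rewrite mulrA ler_peMl ?(ltW n_gt0) //; move: eps_ge0; lra.
have m_gt0 : (0 < #|Lge2 e L0|)%N by apply/card_gt0P; exists w.
have g_gt0 : 0 < g by rewrite ltr0n card_well_reached_gt0.
rewrite mul0r add0r; apply: le_trans (_ : lbar / nbar * g^-1 <= _).
  rewrite ler_wpM2l ?repeat_accept_le ?card_well_reached_gt0 //.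
  by rewrite divr_ge0 ?lbar_ge0 ?(ltW nbar_pos).
rewrite -mulrA -invfM ler_pdivrMr ?mulr_gt0 // mulrAC ler_pdivlMr //.
have m_le : (1 + delta) * m <= B * g.
  apply: le_trans (_ : B * (1 - eps) * m <= _).
    by rewrite ler_wpM2r ?ler0n.
  by rewrite -mulrA ler_wpM2l.
apply: le_trans (_ : (1 + delta) * m * nbar <= _); last first.
  by rewrite [_ * g]mulrC mulrA ler_wpM2r ?(ltW nbar_pos).
have : 0 <= ((1 + delta) * m - lbar) * (a + b).
  by rewrite mulr_ge0 ?subr_ge0 ?addr_ge0 ?ler0n.
have : 0 <= delta * m * lbar by rewrite !mulr_ge0 ?ler0n ?lbar_ge0.
by rewrite n_eq_layers; lra.
Qed.

Lemma sum_sample_prob :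
  (0 < #|T|)%N -> \sum_w sample_prob e L0 lbar rs0 w = 1.
Proof.
move=> T_gt0; have nbar_neq0 := lt0r_neq0 (nbar_gt0 T_gt0).
under eq_bigr do rewrite sample_probE //.
rewrite big_split /= -mulr_suml -mulr_sumr.
have -> : \sum_w (w \notin Lge2 e L0)%:R = a + b.
  rewrite -natrD -card_setC_Lge2 -sum1_card natr_sum [RHS]big_mkcond.
  by apply: eq_bigr => w _; rewrite in_setC; case: (w \in Lge2 e L0).
(* when L_{>=2} is empty Reach never succeeds, but then lbar = 0 *)
have lbar_sum :
    lbar * \sum_w repeat_until (accept_weight e L0 rs0) w = lbar.
  have [m0|m_gt0] := posnP #|Lge2 e L0|.
    suff -> : lbar = 0 by rewrite mul0r.
    apply/eqP; rewrite eq_le lbar_ge0 andbT.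
    by move: lbar_le; rewrite m0 mulr0.
  by rewrite sum_repeat_accept ?mulr1 ?card_well_reached_gt0.
by rewrite mulrAC lbar_sum; field.
Qed.

End Sample.

Theorem theorem3p1 (R : realFieldType) :
  exists (C c0 : R), 0 < c0 /\
  forall (T : finType) (e : rel T), symmetric e -> irreflexive e ->
  forall (L0 : {set T}) (eps delta lbar rs0 : R),
    0 <= eps -> 0 <= delta -> eps + delta <= c0 ->
    (1 - delta) * #|Lge2 e L0|%:R <= lbar ->
    lbar <= (1 + delta) * #|Lge2 e L0|%:R ->
    0 < rs0 ->
    (1 - eps) * #|Lge2 e L0|%:R
      <= #|[set v in Lge2 e L0 | rs0 <= rs R e L0 v]|%:R ->
    tv_uniform (sample_prob e L0 lbar rs0)
      <= eps + delta + C * (eps + delta) ^+ 2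
    /\ forall w : T,
         sample_prob e L0 lbar rs0 w
           <= (1 + eps + delta + C * (eps + delta) ^+ 2) / #|T|%:R.
Proof.
exists 2, (1 / 2); split; first by rewrite divr_gt0 ?ltr0n.
move=> T e _ _ L0 eps delta lbar rs0 eps_ge0 delta_ge0 eps_delta_le.
move=> lbar_ge lbar_le rs0_gt0 good_ge.
have excess_ge0 : 0 <= eps + delta + 2 * (eps + delta) ^+ 2.
  by have := sqr_ge0 (eps + delta); move: eps_ge0 delta_ge0; lra.
split; last by move=> w; exact: sample_prob_le.
have [T0|T_gt0] := posnP #|T|.
  by rewrite /tv_uniform big_pred0 ?mulr0 // => v; have := card0_eq T0 v.
set B := 1 + eps + delta + 2 * (eps + delta) ^+ 2.
apply: le_trans (@tv_uniform_le _ _ _ B _ _ _) _.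
- by rewrite /B; move: excess_ge0; lra.
- exact: (sum_sample_prob eps_ge0 delta_ge0 eps_delta_le lbar_ge lbar_le
           rs0_gt0 good_ge T_gt0).
- by move=> w; exact: sample_prob_le.
- by rewrite /B; lra.
Qed.
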